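(* Let $n\ge1$, $D\ge1$, and let $X_n=\{\mathbf{x}^0,\ldots,\mathbf{x}^{n-1}\}\subseteq\{0,1\}^D$ consist of $n$ pairwise distinct vectors, indexed so that $\mathbf{a}\cdot\mathbf{x}^0<\cdots<\mathbf{a}\cdot\mathbf{x}^{n-1}$ for some $\mathbf{a}\in\mathbb{Z}^D$. Then there is a three-layer Boolean threshold network with layer sizes $D$, $n$, $D$ that is a perfect autoencoder for $X_n$, with the second layer as middle layer.
   Context: A Boolean threshold function is a map $\{0,1\}^h\to\{0,1\}$, $\mathbf{u}\mapsto[\mathbf{w}\cdot\mathbf{u}\ge\theta]$ (value $1$ iff $\mathbf{w}\cdot\mathbf{u}\ge\theta$) with $\mathbf{w}\in\mathbb{Z}^h,\theta\in\mathbb{Z}$. An $L$-layer Boolean threshold network has layers $1,\ldots,L$; layer $1$ is the input; each node of layer $t+1$ computes a Boolean threshold function of the values of layer $t$. If layer $k$ is designated the middle layer, the encoder $\mathbf{f}$ is the map from layer $1$ values to layer $k$ values and the decoder $\mathbf{g}$ the map from layer $k$ values to layer $L$ values; the network is a perfect autoencoder for $X_n$ if $\mathbf{g}(\mathbf{f}(\mathbf{x}^i))=\mathbf{x}^i$ for all $i$. *)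

From mathcomp Require Import all_boot all_order all_algebra.
Set Implicit Arguments. Unset Strict Implicit. Unset Printing Implicit Defensive.
Import Order.TTheory GRing.Theory Num.Theory.
Local Open Scope ring_scope.

Definition bvec (h : nat) := {ffun 'I_h -> bool}.

Definition bdot (h : nat) (w : 'I_h -> int) (u : bvec h) : int :=
  \sum_(i < h) w i * (u i)%:R.

Definition threshold (h : nat) (w : 'I_h -> int) (theta : int) (u : bvec h) : bool :=
  theta <= bdot w u.

Definition layer (h m : nat) (W : 'I_m -> 'I_h -> int) (th : 'I_m -> int)
  (u : bvec h) : bvec m :=
  [ffun j => threshold (W j) (th j) u].

From mathcomp Require Import all_boot all_order all_algebra.
Set Implicit Arguments. Unset Strict Implicit. Unset Printing Implicit Defensive.
Import Order.TTheory GRing.Theory Num.Theory.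
Local Open Scope ring_scope.

(* The encoder is a thermometer code: middle node j fires on x^i iff
   a . x^i >= a . x^j, i.e. iff j <= i.  The decoder recovers coordinate k of
   x^i as the telescoping sum of the increments x^j_k - x^(j-1)_k over the
   firing nodes j <= i, which is 0 or 1, so threshold 1 reads it off. *)

Definition thermometer (n : nat) (i : 'I_n) : bvec n := [ffun j : 'I_n => (j <= i)%N].

(* [lag c m] is c_(m-1), with the junk value 0 at m = 0 (and for m > n). *)
Definition lag (R : zmodType) (n : nat) (c : 'I_n -> R) (m : nat) : R :=
  if m is m'.+1 then oapp c 0 (insub m') else 0.

Lemma lagS (R : zmodType) (n : nat) (c : 'I_n -> R) (i : 'I_n) :
  lag c i.+1 = c i.
Proof. by rewrite /lag valK. Qed.

Lemma sum_increments_prefix (R : pzRingType) (f : nat -> R) (n i : nat) :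
  (i < n)%N ->
  \sum_(j < n) (f j.+1 - f j) * (j <= i)%N%:R = f i.+1 - f 0.
Proof.
move=> lt_in; set F := fun j : nat => (f j.+1 - f j) * (j <= i)%N%:R.
rewrite -(big_mkord xpredT F) (big_cat_nat _ (n := i.+1)) //=.
have -> : \sum_(i.+1 <= j < n) F j = 0.
  rewrite big_nat_cond big1 // => j /andP[/andP[lt_ij _] _].
  by rewrite /F leqNgt lt_ij mulr0.
rewrite addr0; apply: telescope_sumr_eq => // j /andP[_ le_ji].
by rewrite /F -ltnS le_ji mulr1.
Qed.

Lemma le1_bool_int (b : bool) : (1 <= (b%:R : int)) = b.
Proof. by case: b. Qed.

Lemma layer_thermometer (n h : nat) (a : 'I_h -> int) (x : 'I_n -> bvec h) :
  (forall i j : 'I_n, (i < j)%N -> bdot a (x i) < bdot a (x j)) ->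
  forall i : 'I_n,
    layer (fun _ => a) (fun j => bdot a (x j)) (x i) = thermometer i.
Proof.
move=> incr i; apply/ffunP => j; rewrite !ffunE /threshold.
case: (ltngtP j i) => [lt_ji | lt_ij | /val_inj ->].
- by rewrite (ltW (incr _ _ lt_ji)).
- by apply/negbTE; rewrite -ltNge incr.
- by rewrite !lexx.
Qed.

Definition increment_weights (n h : nat) (x : 'I_n -> bvec h)
  (k : 'I_h) (j : 'I_n) : int :=
  lag (fun j => (x j k)%:R) j.+1 - lag (fun j => (x j k)%:R) j.

Lemma layer_increments_thermometer (n h : nat) (x : 'I_n -> bvec h) :
  forall i : 'I_n,
    layer (increment_weights x) (fun _ => 1) (thermometer i) = x i.
Proof.
move=> i; apply/ffunP => k; rewrite ffunE /threshold /bdot.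
under eq_bigr => j _ do rewrite ffunE.
by rewrite sum_increments_prefix // subr0 lagS le1_bool_int.
Qed.

Theorem theorem18 (n D : nat) (hn : (1 <= n)%N) (hD : (1 <= D)%N)
  (x : 'I_n -> bvec D) (hx : injective x)
  (hord : exists a : 'I_D -> int,
            forall i j : 'I_n, (i < j)%N -> bdot a (x i) < bdot a (x j)) :
  exists (W1 : 'I_n -> 'I_D -> int) (th1 : 'I_n -> int)
         (W2 : 'I_D -> 'I_n -> int) (th2 : 'I_D -> int),
    forall i : 'I_n, layer W2 th2 (layer W1 th1 (x i)) = x i.
Proof.
case: hord => a incr.
exists (fun _ => a), (fun j => bdot a (x j)), (increment_weights x), (fun _ => 1) => i.
by rewrite layer_thermometer // layer_increments_thermometer.
Qed.
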